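(* Let $\mathcal C$ be a weakly fusion category over an algebraically closed field $k$ and let $M$ be a simple object of $\mathcal C$ such that the object $M\otimes{}^*M$ has a rigid left dual. Then $M$ has a rigid left dual.
   Context: A monoidal r-category is a monoidal category $(\mathcal C,\otimes,\mathbf 1)$ such that for each object $X$ the functor $Y\mapsto\mathrm{Hom}(\mathbf 1,X\otimes Y)$ is representable by an object $X^*$ (natural isomorphisms $\mathrm{Hom}(\mathbf 1,X\otimes Y)\cong \mathrm{Hom}(X^*,Y)$), and $X\mapsto X^*$ is an equivalence $\mathcal C\to\mathcal C^{\mathrm{op}}$ whose inverse is denoted $X\mapsto{}^*X$. A weakly fusion category over $k$ is a finite semisimple $k$-linear abelian monoidal r-category whose unit $\mathbf 1$ is simple. An object $X$ has a rigid left dual if there are an object $X'$ and morphisms $c:\mathbf 1\to X\otimes X'$, $d:X'\otimes X\to\mathbf 1$ satisfying $(\mathrm{id}_X\otimes d)\circ(c\otimes\mathrm{id}_X)=\mathrm{id}_X$ and $(d\otimes\mathrm{id}_{X'})\circ(\mathrm{id}_{X'}\otimes c)=\mathrm{id}_{X'}$ (i.e. $X'\otimes(-)$ is left adjoint to $X\otimes(-)$). *)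

From HB Require Import structures.
From mathcomp Require Import all_boot all_algebra.
Set Implicit Arguments. Unset Strict Implicit. Unset Printing Implicit Defensive.
Import GRing.Theory.
Local Open Scope ring_scope.

Record LinCat (k : fieldType) := {
  ob :> Type;
  hom : ob -> ob -> lmodType k;
  idm : forall a, hom a a;
  comp : forall a b c, hom b c -> hom a b -> hom a c;
  comp_assoc : forall a b c d (f : hom c d) (g : hom b c) (h : hom a b),
      comp f (comp g h) = comp (comp f g) h;
  comp_id_l : forall a b (f : hom a b), comp (idm b) f = f;
  comp_id_r : forall a b (f : hom a b), comp f (idm a) = f;
  comp_linear_l : forall a b c (h : hom a b) (r : k) (f g : hom b c),
      comp (r *: f + g) h = r *: comp f h + comp g h;
  comp_linear_r : forall a b c (f : hom b c) (r : k) (g h : hom a b),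
      comp f (r *: g + h) = r *: comp f g + comp f h
}.
Arguments hom {k C} : rename.
Arguments idm {k C} : rename.
Arguments comp {k C a b c} : rename.

Section CatDefs.
Variables (k : fieldType) (C : LinCat k).

Definition iso (a b : C) (f : hom a b) :=
  exists g : hom b a, comp g f = idm a /\ comp f g = idm b.
Definition isomorphic (a b : C) := exists f : hom a b, iso f.
Definition mono (a b : C) (f : hom a b) :=
  forall (z : C) (g h : hom z a), comp f g = comp f h -> g = h.
Definition epi (a b : C) (f : hom a b) :=
  forall (z : C) (g h : hom b z), comp g f = comp h f -> g = h.

Definition is_zero (z : C) :=
  (forall (a : C) (f g : hom z a), f = g) /\ (forall (a : C) (f g : hom a z), f = g).

Definition is_biproduct (a b p : C) (i1 : hom a p) (i2 : hom b p)
    (p1 : hom p a) (p2 : hom p b) :=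
  [/\ comp p1 i1 = idm a, comp p2 i2 = idm b, comp p2 i1 = 0, comp p1 i2 = 0
    & comp i1 p1 + comp i2 p2 = idm p].

Definition is_kernel (a b z : C) (f : hom a b) (m : hom z a) :=
  comp f m = 0 /\
  forall (w : C) (g : hom w a), comp f g = 0 -> exists! h : hom w z, comp m h = g.
Definition is_cokernel (a b z : C) (f : hom a b) (e : hom b z) :=
  comp e f = 0 /\
  forall (w : C) (g : hom b w), comp g f = 0 -> exists! h : hom z w, comp h e = g.

Definition abelian :=
  (exists z : C, is_zero z) /\
  (forall a b : C, exists (p : C) (i1 : hom a p) (i2 : hom b p) (p1 : hom p a)
        (p2 : hom p b), is_biproduct i1 i2 p1 p2) /\
  (forall (a b : C) (f : hom a b), exists (z : C) (m : hom z a), is_kernel f m) /\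
  (forall (a b : C) (f : hom a b), exists (z : C) (e : hom b z), is_cokernel f e) /\
  (forall (a b : C) (m : hom a b), mono m -> exists (c : C) (f : hom b c), is_kernel f m) /\
  (forall (a b : C) (e : hom a b), epi e -> exists (c : C) (f : hom c a), is_cokernel f e).

Definition simple (x : C) :=
  ~ is_zero x /\ forall (y : C) (m : hom y x), mono m -> is_zero y \/ iso m.

Inductive sum_of_simples : C -> Prop :=
| sos_zero (z : C) : is_zero z -> sum_of_simples z
| sos_add (a s p : C) (i1 : hom a p) (i2 : hom s p) (p1 : hom p a) (p2 : hom p s) :
    sum_of_simples a -> simple s -> is_biproduct i1 i2 p1 p2 -> sum_of_simples p.

Definition semisimple := forall x : C, sum_of_simples x.

Definition findim_homs := forall a b : C,
  exists (n : nat) (v : 'I_n -> hom a b),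
    forall f : hom a b, exists c : 'I_n -> k, f = \sum_(i < n) c i *: v i.

Definition finitely_many_simples :=
  exists (n : nat) (S : 'I_n -> C),
    forall x : C, simple x -> exists i : 'I_n, isomorphic x (S i).

Definition finite_semisimple :=
  [/\ abelian, semisimple, findim_homs & finitely_many_simples].

End CatDefs.

Section MonoidalDef.
Variables (k : fieldType) (C : LinCat k).

Record Monoidal := {
  tens : C -> C -> C;
  tensm : forall a b c d : C, hom a b -> hom c d -> hom (tens a c) (tens b d);
  unit : C;
  assoc : forall a b c : C, hom (tens (tens a b) c) (tens a (tens b c));
  assoc_inv : forall a b c : C, hom (tens a (tens b c)) (tens (tens a b) c);
  lunit : forall a : C, hom (tens unit a) a;
  lunit_inv : forall a : C, hom a (tens unit a);
  runit : forall a : C, hom (tens a unit) a;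
  runit_inv : forall a : C, hom a (tens a unit);
  tensm_id : forall a c : C, tensm (idm a) (idm c) = idm (tens a c);
  tensm_comp : forall (a b e c d f : C) (g1 : hom b e) (g2 : hom a b)
      (h1 : hom d f) (h2 : hom c d),
      tensm (comp g1 g2) (comp h1 h2) = comp (tensm g1 h1) (tensm g2 h2);
  tensm_linear_l : forall (a b c d : C) (r : k) (f g : hom a b) (h : hom c d),
      tensm (r *: f + g) h = r *: tensm f h + tensm g h;
  tensm_linear_r : forall (a b c d : C) (r : k) (f : hom a b) (g h : hom c d),
      tensm f (r *: g + h) = r *: tensm f g + tensm f h;
  assoc_invK : forall a b c : C, comp (assoc_inv a b c) (assoc a b c) = idm _;
  assoc_Kinv : forall a b c : C, comp (assoc a b c) (assoc_inv a b c) = idm _;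
  lunit_invK : forall a : C, comp (lunit_inv a) (lunit a) = idm _;
  lunit_Kinv : forall a : C, comp (lunit a) (lunit_inv a) = idm _;
  runit_invK : forall a : C, comp (runit_inv a) (runit a) = idm _;
  runit_Kinv : forall a : C, comp (runit a) (runit_inv a) = idm _;
  assoc_nat : forall (a a' b b' c c' : C) (f : hom a a') (g : hom b b') (h : hom c c'),
      comp (assoc a' b' c') (tensm (tensm f g) h) = comp (tensm f (tensm g h)) (assoc a b c);
  lunit_nat : forall (a b : C) (f : hom a b),
      comp (lunit b) (tensm (idm unit) f) = comp f (lunit a);
  runit_nat : forall (a b : C) (f : hom a b),
      comp (runit b) (tensm f (idm unit)) = comp f (runit a);
  pentagon : forall a b c d : C,
      comp (tensm (idm a) (assoc b c d))
        (comp (assoc a (tens b c) d) (tensm (assoc a b c) (idm d)))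
      = comp (assoc a b (tens c d)) (assoc (tens a b) c d);
  triangle : forall a b : C,
      comp (tensm (idm a) (lunit b)) (assoc a unit b) = tensm (runit a) (idm b)
}.

End MonoidalDef.
Arguments tens {k C} m _ _ : rename.
Arguments tensm {k C} m {a b c d} : rename.
Arguments unit {k C} m : rename.
Arguments assoc {k C} m : rename.
Arguments assoc_inv {k C} m : rename.
Arguments lunit {k C} m : rename.
Arguments lunit_inv {k C} m : rename.
Arguments runit {k C} m : rename.
Arguments runit_inv {k C} m : rename.

(* r-category structure: for each X, an object X^* representing
   Y |-> Hom(1, X (x) Y), via natural bijections phi (with inverse psi). *)
Section RCatDef.
Variables (k : fieldType) (C : LinCat k) (T : Monoidal C).

Record RStr := {
  dual : C -> C;
  rphi : forall x y : C, hom (unit T) (tens T x y) -> hom (dual x) y;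
  rpsi : forall x y : C, hom (dual x) y -> hom (unit T) (tens T x y);
  rphiK : forall x y : C, cancel (@rphi x y) (@rpsi x y);
  rpsiK : forall x y : C, cancel (@rpsi x y) (@rphi x y);
  rphi_nat : forall (x y y' : C) (g : hom y y') (u : hom (unit T) (tens T x y)),
      @rphi x y' (comp (tensm T (idm x) g) u) = comp g (@rphi x y u)
}.

(* the (contravariant) action of X |-> X^* on morphisms, induced by Yoneda *)
Definition dualm (R : RStr) (x x' : C) (f : hom x x') : hom (dual R x') (dual R x) :=
  @rphi R x' (dual R x) (comp (tensm T f (idm (dual R x))) (@rpsi R x (dual R x) (idm _))).

(* X |-> X^* is an equivalence C -> C^op: fully faithful and essentially surjective *)
Definition dual_equivalence (R : RStr) :=
  (forall x x' : C, bijective (@dualm R x x'))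
  /\ (forall z : C, exists x : C, isomorphic (dual R x) z).

Definition is_rcategory (R : RStr) := dual_equivalence R.

Definition weakly_fusion (R : RStr) :=
  [/\ finite_semisimple C, is_rcategory R & simple (unit T)].

Definition has_rigid_left_dual (x : C) :=
  exists (x' : C) (c : hom (unit T) (tens T x x')) (d : hom (tens T x' x) (unit T)),
    comp (runit T x) (comp (tensm T (idm x) d)
      (comp (assoc T x x' x) (comp (tensm T c (idm x)) (lunit_inv T x)))) = idm x
    /\
    comp (lunit T x') (comp (tensm T d (idm x'))
      (comp (assoc_inv T x' x x') (comp (tensm T (idm x') c) (runit_inv T x')))) = idm x'.

End RCatDef.

(* Since N^* ≅ M, the universal element of Hom(1, N ⊗ N^* ) yields a nonzero e : 1 → N ⊗ M.
   The unit is simple and N ⊗ M is a sum of simples, so e has a retraction s.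
   Let (Z, c_Z, d_Z) be a left dual of M ⊗ N.  The universal element c : 1 → M ⊗ M^* factors
   the coevaluation of M ⊗ N as (M ⊗ α) ∘ c for some α : M^* → N ⊗ Z; with
   β := (d_Z ⊗ M) ∘ (Z ⊗ M ⊗ e) : Z ⊗ M → M, the map d := s ∘ (N ⊗ β) ∘ (α ⊗ M) satisfies
   the first zigzag identity, using only the first zigzag identity of (Z, c_Z, d_Z).  Since c is
   universal, maps out of M^* are determined by their composite with c, and this turns the
   first zigzag identity of (M^*, c, d) into the second. *)

From mathcomp Require Import all_boot all_algebra.
Set Implicit Arguments. Unset Strict Implicit. Unset Printing Implicit Defensive.
Import GRing.Theory.
Local Open Scope ring_scope.

Local Notation "f ∘ g" := (comp f g) (at level 40, left associativity).

Section LinearCategory.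
Variables (k : fieldType) (C : LinCat k).

Lemma comp0l (x y z : C) (f : hom x y) : (0 : hom y z) ∘ f = 0.
Proof.
have := comp_linear_l f 1 (0 : hom y z) 0.
by rewrite !scale1r addr0 => /(congr1 (fun q => q - 0 ∘ f)); rewrite subrr addrK.
Qed.

Lemma comp0r (x y z : C) (f : hom y z) : f ∘ (0 : hom x y) = 0.
Proof.
have := comp_linear_r f 1 (0 : hom x y) 0.
by rewrite !scale1r addr0 => /(congr1 (fun q => q - f ∘ 0)); rewrite subrr addrK.
Qed.

Lemma compBr (x y z : C) (f : hom y z) (g h : hom x y) : f ∘ (g - h) = f ∘ g - f ∘ h.
Proof. by rewrite addrC -scaleN1r comp_linear_r scaleN1r addrC. Qed.

Lemma compDl (x y z : C) (f : hom x y) (g h : hom y z) : (g + h) ∘ f = g ∘ f + h ∘ f.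
Proof. by rewrite -[g]scale1r comp_linear_l !scale1r. Qed.

Lemma iso0_is_zero (x y : C) : iso (0 : hom x y) -> is_zero y.
Proof.
case=> g [_ g0]; split=> a u v.
  by rewrite -[u]comp_id_r -[v]comp_id_r -g0 !comp_assoc !comp0r !comp0l.
by rewrite -[u]comp_id_l -[v]comp_id_l -g0 !comp0l.
Qed.

Lemma kernel_mono (x y z : C) (f : hom x y) (m : hom z x) : is_kernel f m -> mono m.
Proof.
case=> fm0 kerP w g h mg_mh.
have [u [_ uniq_u]] : exists! u, m ∘ u = m ∘ g by apply: kerP; rewrite comp_assoc fm0 comp0l.
by rewrite -(uniq_u g erefl) -(uniq_u h (esym mg_mh)).
Qed.

Hypothesis C_abelian : abelian C.

Lemma simple_iso (x y : C) (f : hom x y) : simple x -> simple y -> f <> 0 -> iso f.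
Proof.
move=> [x_neq0 x_sub] [_ y_sub] f_neq0.
have [z [m [fm0 kerP]]] := C_abelian.2.2.1 _ _ f.
have [z0 | [g [_ mg]]] := x_sub z m (kernel_mono (conj fm0 kerP)); last first.
  by case: f_neq0; rewrite -[f]comp_id_r -mg comp_assoc fm0 comp0l.
have f_mono : mono f.
  move=> w g h fg_fh; apply/eqP; rewrite -subr_eq0; apply/eqP.
  have [u [mu _]] : exists! u, m ∘ u = g - h by apply: kerP; rewrite compBr fg_fh subrr.
  by rewrite -mu (z0.2 _ u 0) comp0r.
by case: (y_sub x f f_mono).
Qed.

Lemma simple_retract (U P : C) (f : hom U P) :
  simple U -> sum_of_simples P -> f <> 0 -> exists r : hom P U, r ∘ f = idm U.
Proof.
move=> U_simple P_sos; elim: P_sos f => [z z0 | a s p i1 i2 p1 p2 _ IHa s_simple].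
  by move=> f f_neq0; case: f_neq0; apply: z0.2.
case=> _ _ _ _ sum_id f f_neq0.
have [p2f0 | p2f_neq0] := eqVneq (p2 ∘ f) 0; last first.
  have [g [gp2f _]] := simple_iso U_simple s_simple (elimN eqP p2f_neq0).
  by exists (g ∘ p2); rewrite -comp_assoc.
have [|r rp1f] := IHa (p1 ∘ f).
  move=> p1f0; apply: f_neq0.
  by rewrite -[f]comp_id_l -sum_id compDl -!comp_assoc p1f0 p2f0 !comp0r addr0.
by exists (r ∘ p1); rewrite -comp_assoc.
Qed.

End LinearCategory.

Section MonoidalCategory.
Variables (k : fieldType) (C : LinCat k) (T : Monoidal C).
Local Notation "f ⊗ g" := (tensm T f g) (at level 35).
Local Notation "x ⊠ y" := (tens T x y) (at level 35).
Local Notation I := (unit T).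
Local Notation asc := (assoc T).
Local Notation asci := (assoc_inv T).
Local Notation lu := (lunit T).
Local Notation lui := (lunit_inv T).
Local Notation ru := (runit T).
Local Notation rui := (runit_inv T).

Lemma comp_congr2 (x y z : C) (u : hom y z) (v : hom x y) (w : hom x z) :
  u ∘ v = w -> forall z' (t : hom z z'), t ∘ u ∘ v = t ∘ w.
Proof. by move=> <- z' t; rewrite comp_assoc. Qed.

Lemma comp_congr3 (x0 x y z : C) (u : hom y z) (v : hom x y) (v' : hom x0 x) (w : hom x0 z) :
  u ∘ v ∘ v' = w -> forall z' (t : hom z z'), t ∘ u ∘ v ∘ v' = t ∘ w.
Proof. by move=> <- z' t; rewrite !comp_assoc. Qed.

Lemma comp_congr4 (x1 x0 x y z : C) (u : hom y z) (v : hom x y) (v' : hom x0 x)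
    (v'' : hom x1 x0) (w : hom x1 z) :
  u ∘ v ∘ v' ∘ v'' = w -> forall z' (t : hom z z'), t ∘ u ∘ v ∘ v' ∘ v'' = t ∘ w.
Proof. by move=> <- z' t; rewrite !comp_assoc. Qed.

Lemma split_epi_cancel (a b c : C) (f g : hom b c) (h : hom a b) (h' : hom b a) :
  h ∘ h' = idm b -> f ∘ h = g ∘ h -> f = g.
Proof. by move=> hh' fh_gh; rewrite -[f]comp_id_r -[g]comp_id_r -hh' !comp_assoc fh_gh. Qed.

Lemma split_mono_cancel (a b c : C) (f g : hom a b) (h : hom b c) (h' : hom c b) :
  h' ∘ h = idm b -> h ∘ f = h ∘ g -> f = g.
Proof. by move=> h'h hf_hg; rewrite -[f]comp_id_l -[g]comp_id_l -h'h -!comp_assoc hf_hg. Qed.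

Lemma tensm_idl_comp (x a b c : C) (f : hom b c) (g : hom a b) :
  idm x ⊗ (f ∘ g) = (idm x ⊗ f) ∘ (idm x ⊗ g).
Proof. by rewrite -tensm_comp comp_id_l. Qed.

Lemma tensm_idr_comp (x a b c : C) (f : hom b c) (g : hom a b) :
  (f ∘ g) ⊗ idm x = (f ⊗ idm x) ∘ (g ⊗ idm x).
Proof. by rewrite -tensm_comp comp_id_l. Qed.

Lemma tensm_slide (a b c d : C) (f : hom a b) (g : hom c d) :
  (idm b ⊗ g) ∘ (f ⊗ idm c) = (f ⊗ idm d) ∘ (idm a ⊗ g).
Proof. by rewrite -!tensm_comp !comp_id_l !comp_id_r. Qed.

Lemma lunit_inv_nat (a b : C) (f : hom a b) : (idm I ⊗ f) ∘ lui a = lui b ∘ f.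
Proof.
apply: (split_mono_cancel (lunit_invK T b)).
by rewrite comp_assoc lunit_nat -comp_assoc lunit_Kinv comp_assoc lunit_Kinv comp_id_r comp_id_l.
Qed.

Lemma runit_inv_nat (a b : C) (f : hom a b) : (f ⊗ idm I) ∘ rui a = rui b ∘ f.
Proof.
apply: (split_mono_cancel (runit_invK T b)).
by rewrite comp_assoc runit_nat -comp_assoc runit_Kinv comp_assoc runit_Kinv comp_id_r comp_id_l.
Qed.

Lemma assoc_inv_nat (a a' b b' c c' : C) (f : hom a a') (g : hom b b') (h : hom c c') :
  asci a' b' c' ∘ (f ⊗ (g ⊗ h)) = ((f ⊗ g) ⊗ h) ∘ asci a b c.
Proof.
apply: (split_mono_cancel (assoc_invK T a' b' c')).
by rewrite comp_assoc assoc_Kinv comp_id_l comp_assoc assoc_nat -comp_assoc assoc_Kinv comp_id_r.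
Qed.

Lemma tensm_unit_l_inj (a b : C) (f g : hom a b) : idm I ⊗ f = idm I ⊗ g -> f = g.
Proof.
have fE (h : hom a b) : h = lu b ∘ (idm I ⊗ h) ∘ lui a.
  by rewrite lunit_nat -comp_assoc lunit_Kinv comp_id_r.
by move=> fg; rewrite (fE f) (fE g) fg.
Qed.

Lemma tensm_unit_r_inj (a b : C) (f g : hom a b) : f ⊗ idm I = g ⊗ idm I -> f = g.
Proof.
have fE (h : hom a b) : h = ru b ∘ (h ⊗ idm I) ∘ rui a.
  by rewrite runit_nat -comp_assoc runit_Kinv comp_id_r.
by move=> fg; rewrite (fE f) (fE g) fg.
Qed.

Lemma pentagon_inv (x y z w : C) :
  (idm x ⊗ asci y z w) ∘ asc x y (z ⊠ w)
  = asc x (y ⊠ z) w ∘ (asc x y z ⊗ idm w) ∘ asci (x ⊠ y) z w.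
Proof.
apply: (split_epi_cancel (assoc_Kinv T (x ⊠ y) z w)).
rewrite -!comp_assoc assoc_invK comp_id_r -pentagon !comp_assoc -tensm_idl_comp.
by rewrite assoc_invK tensm_id comp_id_l.
Qed.

(* Kelly's coherence identities. *)
Lemma lunit_tens (x y : C) : lu (x ⊠ y) ∘ asc I x y = lu x ⊗ idm y.
Proof.
apply: tensm_unit_l_inj.
apply: (@split_epi_cancel _ _ _ _ _ (asc I (I ⊠ x) y ∘ (asc I I x ⊗ idm y))
                     ((asci I I x ⊗ idm y) ∘ asci I (I ⊠ x) y)).
  rewrite -comp_assoc (comp_assoc (asc I I x ⊗ idm y)) -tensm_idr_comp.
  by rewrite assoc_Kinv tensm_id comp_id_l assoc_Kinv.
rewrite tensm_idl_comp -comp_assoc pentagon comp_assoc triangle.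
rewrite -(tensm_id T x y) -assoc_nat -(triangle T I x) tensm_idr_comp comp_assoc assoc_nat.
by rewrite -comp_assoc.
Qed.

Lemma runit_tens (x y : C) : (idm x ⊗ ru y) ∘ asc x y I = ru (x ⊠ y).
Proof.
apply: tensm_unit_r_inj; apply/esym.
apply: (split_mono_cancel (assoc_invK T x y I)).
rewrite -(triangle T (x ⊠ y) I) -(tensm_id T x y) comp_assoc assoc_nat -comp_assoc -pentagon.
by rewrite !comp_assoc -tensm_idl_comp triangle -assoc_nat -comp_assoc -tensm_idr_comp.
Qed.

Lemma lunit_unit : lu I = ru I.
Proof.
have lu_II : lu (I ⊠ I) = idm I ⊗ lu I.
  by apply: (split_mono_cancel (lunit_invK T I)); rewrite lunit_nat.
by apply: tensm_unit_r_inj; rewrite -lunit_tens -triangle lu_II.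
Qed.

Lemma lunit_tens_inv (x y : C) : (lu x ⊗ idm y) ∘ asci I x y = lu (x ⊠ y).
Proof. by rewrite -lunit_tens -comp_assoc assoc_Kinv comp_id_r. Qed.

Lemma runit_inv_tens (x y : C) : idm x ⊗ rui y = asc x y I ∘ rui (x ⊠ y).
Proof.
rewrite -[LHS]comp_id_r -(runit_Kinv T (x ⊠ y)) -runit_tens !comp_assoc -tensm_idl_comp.
by rewrite runit_invK tensm_id comp_id_l.
Qed.

Section LeftDual.
Variables (X X' : C) (c : hom I (X ⊠ X')) (d : hom (X' ⊠ X) I).

Definition evl (W : C) : hom (X' ⊠ (X ⊠ W)) W := lu W ∘ (d ⊗ idm W) ∘ asci X' X W.

Hypothesis zigzag_l : ru X ∘ (idm X ⊗ d) ∘ asc X X' X ∘ (c ⊗ idm X) ∘ lui X = idm X.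

Lemma zigzag_l_tens (W : C) :
  (idm X ⊗ evl W) ∘ asc X X' (X ⊠ W) ∘ (c ⊗ idm (X ⊠ W)) = lu (X ⊠ W).
Proof.
have snakeE : ru X ∘ (idm X ⊗ d) ∘ asc X X' X ∘ (c ⊗ idm X) = lu X.
  by apply: (split_epi_cancel (lunit_invK T X)); rewrite zigzag_l lunit_Kinv.
rewrite /evl !tensm_idl_comp -(comp_assoc _ (idm X ⊗ asci X' X W)) pentagon_inv.
rewrite !comp_assoc -(comp_assoc (idm X ⊗ lu W)) -assoc_nat !comp_assoc triangle.
rewrite -(tensm_id T X W) -!comp_assoc assoc_inv_nat !comp_assoc -!tensm_idr_comp.
by rewrite snakeE lunit_tens_inv.
Qed.

Hypothesis c_universal :
  forall (Y : C) (g h : hom X' Y), (idm X ⊗ g) ∘ c = (idm X ⊗ h) ∘ c -> g = h.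

Lemma zigzag_r : lu X' ∘ (d ⊗ idm X') ∘ asci X' X X' ∘ (idm X' ⊗ c) ∘ rui X' = idm X'.
Proof.
apply: c_universal; rewrite tensm_id comp_id_l -/(evl X') 2!tensm_idl_comp.
rewrite runit_inv_tens !comp_assoc (comp_congr2 (esym (runit_inv_nat c))) !comp_assoc.
rewrite (comp_congr2 (esym (assoc_nat T (idm X) (idm X') c))) tensm_id !comp_assoc.
rewrite (comp_congr2 (tensm_slide c c)) !comp_assoc zigzag_l_tens.
by rewrite lunit_nat lunit_unit -comp_assoc runit_Kinv comp_id_r.
Qed.

Lemma has_rigid_left_dual_of_zigzag_l : has_rigid_left_dual T X.
Proof. by exists X', c, d; rewrite !comp_assoc; split; [apply: zigzag_l | apply: zigzag_r]. Qed.

End LeftDual.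

Section LeftDualFromTensor.
Variables (M N Z : C) (cZ : hom I ((M ⊠ N) ⊠ Z)) (dZ : hom (Z ⊠ (M ⊠ N)) I).
Hypothesis zigzagZ :
  ru (M ⊠ N) ∘ (idm (M ⊠ N) ⊗ dZ) ∘ asc (M ⊠ N) Z (M ⊠ N) ∘ (cZ ⊗ idm (M ⊠ N)) ∘ lui (M ⊠ N)
  = idm (M ⊠ N).
Variables (e : hom I (N ⊠ M)) (s : hom (N ⊠ M) I).
Hypothesis se : s ∘ e = idm I.
Variables (X' : C) (c : hom I (M ⊠ X')) (alpha : hom X' (N ⊠ Z)).
Hypothesis c_factor : (idm M ⊗ alpha) ∘ c = asc M N Z ∘ cZ.

Definition e_mid : hom M ((M ⊠ N) ⊠ M) := asci M N M ∘ (idm M ⊗ e) ∘ rui M.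
Definition beta : hom (Z ⊠ M) M := evl dZ M ∘ (idm Z ⊗ e_mid).
Definition evM : hom (X' ⊠ M) I := s ∘ (idm N ⊗ beta) ∘ asc N Z M ∘ (alpha ⊗ idm M).

Lemma beta_snake : (idm (M ⊠ N) ⊗ beta) ∘ asc (M ⊠ N) Z M ∘ (cZ ⊗ idm M) ∘ lui M = e_mid.
Proof.
rewrite /beta tensm_idl_comp (comp_congr2 (esym (assoc_nat T (idm (M ⊠ N)) (idm Z) e_mid))).
rewrite tensm_id !comp_assoc (comp_congr2 (tensm_slide cZ e_mid)) !comp_assoc.
rewrite (comp_congr2 (lunit_inv_nat e_mid)) !comp_assoc (zigzag_l_tens zigzagZ).
by rewrite lunit_Kinv comp_id_l.
Qed.

Lemma zigzag_l_evM : ru M ∘ (idm M ⊗ evM) ∘ asc M X' M ∘ (c ⊗ idm M) ∘ lui M = idm M.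
Proof.
rewrite /evM 3!tensm_idl_comp !comp_assoc.
rewrite (comp_congr2 (esym (assoc_nat T (idm M) alpha (idm M)))) !comp_assoc.
rewrite (comp_congr2 (esym (tensm_idr_comp M (idm M ⊗ alpha) c))) c_factor.
rewrite tensm_idr_comp !comp_assoc.
have pentagonA : (idm M ⊗ asc N Z M) ∘ asc M (N ⊠ Z) M ∘ (asc M N Z ⊗ idm M)
                 = asc M N (Z ⊠ M) ∘ asc (M ⊠ N) Z M by rewrite -comp_assoc pentagon.
rewrite (comp_congr3 pentagonA) !comp_assoc.
rewrite (comp_congr2 (esym (assoc_nat T (idm M) (idm N) beta))) tensm_id !comp_assoc.
rewrite (comp_congr4 beta_snake) /e_mid !comp_assoc (comp_congr2 (assoc_Kinv T M N M)) comp_id_r.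
by rewrite (comp_congr2 (esym (tensm_idl_comp M s e))) se tensm_id comp_id_r runit_Kinv.
Qed.

End LeftDualFromTensor.

Section RCategory.
Variable R : RStr T.

Definition rcoev (x : C) : hom I (x ⊠ dual R x) := rpsi (idm (dual R x)).

Lemma rpsiE (x y : C) (g : hom (dual R x) y) : (idm x ⊗ g) ∘ rcoev x = rpsi g.
Proof. by apply: (can_inj (@rphiK _ _ _ R x y)); rewrite rphi_nat !rpsiK comp_id_r. Qed.

Lemma rcoev_universal (x y : C) (g h : hom (dual R x) y) :
  (idm x ⊗ g) ∘ rcoev x = (idm x ⊗ h) ∘ rcoev x -> g = h.
Proof. by rewrite !rpsiE => /(can_inj (@rpsiK _ _ _ R x y)). Qed.

Lemma rpsi_eq0 (x y : C) (g : hom (dual R x) y) : rpsi g = 0 -> g = 0.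
Proof.
move=> g0; rewrite -[g]rpsiK g0.
have -> : 0 = (idm x ⊗ (0 : hom y y)) ∘ (0 : hom I (x ⊠ y)) by rewrite comp0r.
by rewrite rphi_nat comp0l.
Qed.

Lemma rigid_left_dual_of_tensor (M N : C) (e : hom I (N ⊠ M)) (s : hom (N ⊠ M) I) :
  has_rigid_left_dual T (M ⊠ N) -> s ∘ e = idm I -> has_rigid_left_dual T M.
Proof.
case=> Z [cZ [dZ [zigzagZ _]]] se; rewrite !comp_assoc in zigzagZ.
pose alpha := rphi R (asc M N Z ∘ cZ).
have c_factor : (idm M ⊗ alpha) ∘ rcoev M = asc M N Z ∘ cZ by rewrite rpsiE rphiK.
exact: has_rigid_left_dual_of_zigzag_l (zigzag_l_evM zigzagZ se c_factor) (@rcoev_universal M).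
Qed.

End RCategory.

End MonoidalCategory.

Theorem proposition2p10 (k : closedFieldType) (C : LinCat k) (T : Monoidal C)
  (R : RStr T) (HC : weakly_fusion R)
  (M : C) (HM : simple M)
  (N : C) (HN : isomorphic (dual R N) M)  (* N plays the role of  *M *)
  (Hd : has_rigid_left_dual T (tens T M N)) :
  has_rigid_left_dual T M.
Proof.
case: HC => [[C_abelian C_semisimple _ _] _ unit_simple].
case: HN => f f_iso.
have e_neq0 : rpsi f <> 0.
  by move/rpsi_eq0 => f0; rewrite f0 in f_iso; apply: HM.1 (iso0_is_zero f_iso).
have [s se] := simple_retract C_abelian unit_simple (C_semisimple _) e_neq0.
exact: (rigid_left_dual_of_tensor R Hd se).
Qed.
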